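(* Let $S(\mathbf{G},\mathbf{\Sigma})$ be a constrained switching system and $T\ge1$ an integer. Let $S^T$ be its $T$-product lift and $S_{T-1}$ its $(T-1)$-path-dependent lift. Then $$\gamma_*(S_{T-1})\le\gamma_*(S^T)^{1/T}.$$
   Context: An automaton $\mathbf{G}(V,E)$ is a strongly connected directed graph with finite node set $V$ and finite edge set $E$ of labelled edges $(v,w,\sigma)$, $\sigma$ indexing a matrix $A_\sigma$ of a finite set $\mathbf{\Sigma}\subset\mathbb{R}^{n\times n}$. A path of length $T$ is a sequence of $T$ consecutive edges. The constrained switching system $S(\mathbf{G},\mathbf{\Sigma})$ is $x_{t+1}=A_{\sigma(t)}x_t$ with switching sequences equal to label sequences of paths in $\mathbf{G}$. $T$-product lift $S^T$: automaton with the same nodes $V$ and one edge $(v,w,\{\sigma(1)\dots\sigma(T)\})$ per path of length $T$ in $\mathbf{G}$ from $v$ to $w$ with labels $\sigma(1),\dots,\sigma(T)$, whose associated matrix is $A_{\sigma(T)}\cdots A_{\sigma(1)}$. $M$-path-dependent lift $S_M$ ($M\ge0$): same matrix set $\mathbf{\Sigma}$; for $M=0$ the automaton is $\mathbf{G}$; for $M\ge1$ the automaton has one node $v_p$ per path $p$ of length $M$ in $\mathbf{G}$, and for each path $p=(e_1,\dots,e_{M+1})$ of length $M+1$ in $\mathbf{G}$ an edge $(v_{p^-},v_{p^+},\sigma_p)$ where $p^-=(e_1,\dots,e_M)$, $p^+=(e_2,\dots,e_{M+1})$ and $\sigma_p$ is the label of $e_{M+1}$. For a constrained switching system $S'$ on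 automaton $(V',E')$, $\gamma_*(S')$ is the infimum of $\gamma$ such that there exist symmetric $Q_v\succ0$ ($v\in V'$) with $\gamma^2Q_v-A_\sigma^\top Q_wA_\sigma\succeq0$ for all $(v,w,\sigma)\in E'$. *)

From HB Require Import structures.
From mathcomp Require Import all_boot all_order all_algebra.
From mathcomp Require Import boolp classical_sets reals exp.
Set Implicit Arguments. Unset Strict Implicit. Unset Printing Implicit Defensive.
Import Order.TTheory GRing.Theory Num.Theory.
Local Open Scope ring_scope.

Section Defs.
Variables (R : realType) (n : nat).

Definition posdef (Q : 'M[R]_n) : Prop :=
  forall x : 'cV[R]_n, x != 0 -> 0 < (x^T *m Q *m x) 0 0.
Definition psd (Q : 'M[R]_n) : Prop :=
  forall x : 'cV[R]_n, 0 <= (x^T *m Q *m x) 0 0.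

Definition gamma_star (N L : finType) (E : {set N * N * L})
  (A : L -> 'M[R]_n) : R :=
  inf (fun g : R => 0 <= g /\
     exists Q : N -> 'M[R]_n,
       (forall v, (Q v)^T = Q v /\ posdef (Q v)) /\
       (forall v w s, (v, w, s) \in E ->
          psd (g ^+ 2 *: Q v - (A s)^T *m Q w *m A s))).
End Defs.

Section Automata.
Variables (V L : finType) (E : {set V * V * L}).

Definition edge_rel : rel V := fun v w => [exists s : L, (v, w, s) \in E].
Definition strongly_connected : Prop := forall v w : V, connect edge_rel v w.

Definition consec (e e' : V * V * L) : bool := e.1.2 == e'.1.1.
Definition is_path (p : seq (V * V * L)) : bool :=
  all (fun e => e \in E) p && sorted consec p.
Definition pstart (p : seq (V * V * L)) (v : V) : bool :=
  if p is e :: _ then e.1.1 == v else false.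
Definition pend (p : seq (V * V * L)) (w : V) : bool :=
  if p is e :: p' then (last e p').1.2 == w else false.

Definition prodlift_edges (T : nat) : {set V * V * (T.-tuple L)} :=
  [set x | [exists p : T.-tuple (V * V * L),
     [&& is_path p, pstart p x.1.1, pend p x.1.2 &
         map (fun e => e.2) p == val x.2]]].

Definition pnode (M : nat) := {p : M.-tuple (V * V * L) | is_path p}.
HB.instance Definition _ M := Finite.on (pnode M).

Definition pathlift_edges (M : nat) : {set pnode M * pnode M * L} :=
  [set x : pnode M * pnode M * L | [exists e : V * V * L,
     [&& is_path (rcons (val x.1.1 : seq _) e),
         (val x.1.2 : seq _) == behead (rcons (val x.1.1 : seq _) e) &
         e.2 == x.2]]].
End Automata.

(* matrix of a label sequence s(1)..s(T): A_{s(T)} ... A_{s(1)} *)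
Definition prodlift_mx (R : realType) (n : nat) (L : finType)
  (A : L -> 'M[R]_n) (T : nat) (s : T.-tuple L) : 'M[R]_n :=
  foldl (fun M l => A l *m M) 1%:M (val s).

Definition gamma_pathdep (R : realType) (n : nat) (V L : finType)
  (E : {set V * V * L}) (A : L -> 'M[R]_n) (M : nat) : R :=
  match M with
  | 0 => gamma_star E A
  | M'.+1 => gamma_star (pathlift_edges E M'.+1) A
  end.

(* Let Q be a quadratic certificate for S^T at rate r^T and P_v := Q_v^-1.
   By the duality [Y >= B^T X B  ==>  X^-1 >= B Y^-1 B^T], every product B of
   T consecutive matrices along a path from v to w satisfies
   P_w >= r^(-2T) B P_v B^T.  A node p of S_(T-1) is a path of length T-1;
   give it P_p := sum_j r^(-2j) B_j P_(v_j) B_j^T over the suffixes of p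
   (B_j the product along the suffix of length j, v_j its start).  Following
   an edge with matrix A shifts the suffixes, so that
   A P_p A^T = r^2 (P_p' - P_w) + r^(-2(T-1)) B P_v B^T <= r^2 P_p',
   and dualizing again shows that the P_p^-1 certify S_(T-1) at rate r. *)
From HB Require Import structures.
From mathcomp Require Import all_boot all_order all_algebra zify.
From mathcomp Require Import boolp classical_sets reals exp.
From mathcomp Require Import lra.
Import Order.TTheory GRing.Theory Num.Theory.
Set Implicit Arguments. Unset Strict Implicit. Unset Printing Implicit Defensive.
Local Open Scope ring_scope.

Section QuadraticForm.
Variables (R : realType) (n : nat).
Implicit Types (Q X Y B : 'M[R]_n) (x : 'cV[R]_n).

Definition qform Q x : R := (x^T *m Q *m x) 0 0.

Lemma qformD Q1 Q2 x : qform (Q1 + Q2) x = qform Q1 x + qform Q2 x.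
Proof. by rewrite /qform mulmxDr mulmxDl !mxE. Qed.

Lemma qformB Q1 Q2 x : qform (Q1 - Q2) x = qform Q1 x - qform Q2 x.
Proof. by rewrite /qform mulmxBr mulmxBl !mxE. Qed.

Lemma qformZ (a : R) Q x : qform (a *: Q) x = a * qform Q x.
Proof. by rewrite /qform -scalemxAr -scalemxAl mxE. Qed.

Lemma qform_conj B X x : qform (B *m X *m B^T) x = qform X (B^T *m x).
Proof. by rewrite /qform trmx_mul trmxK !mulmxA. Qed.

Lemma qform0 Q : qform Q 0 = 0.
Proof. by rewrite /qform mulmx0 mxE. Qed.

Lemma psdE Q : psd Q <-> forall x, 0 <= qform Q x.
Proof. by []. Qed.

Lemma posdefE Q : posdef Q <-> forall x, x != 0 -> 0 < qform Q x.
Proof. by []. Qed.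

Lemma psd0 : psd (0 : 'M[R]_n).
Proof. by move=> x; rewrite mulmx0 mul0mx mxE. Qed.

Lemma psdD Q1 Q2 : psd Q1 -> psd Q2 -> psd (Q1 + Q2).
Proof. by rewrite !psdE => h1 h2 x; rewrite qformD addr_ge0. Qed.

Lemma psdZ (a : R) Q : 0 <= a -> psd Q -> psd (a *: Q).
Proof. by rewrite !psdE => a0 h x; rewrite qformZ mulr_ge0. Qed.

Lemma psd_conj B X : psd X -> psd (B *m X *m B^T).
Proof. by rewrite !psdE => h x; rewrite qform_conj. Qed.

Lemma posdef_psd Q : posdef Q -> psd Q.
Proof.
rewrite posdefE psdE => h x; have [->|/h/ltW//] := eqVneq x 0.
by rewrite qform0.
Qed.

Lemma posdefD Q1 Q2 : posdef Q1 -> psd Q2 -> posdef (Q1 + Q2).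
Proof. by rewrite !posdefE psdE => h1 h2 x /h1; rewrite qformD; have := h2 x; lra. Qed.

Lemma posdefZ (a : R) Q : 0 < a -> posdef Q -> posdef (a *: Q).
Proof. by rewrite !posdefE => a0 h x /h; rewrite qformZ; apply: mulr_gt0. Qed.

Lemma posdef_unitmx Q : posdef Q -> Q \in unitmx.
Proof.
move=> h; rewrite unitmxE unitfE; apply/negP => /det0P[v v0 vQ].
have /h : v^T != 0 by rewrite trmx_eq0.
by rewrite trmxK vQ mul0mx mxE ltxx.
Qed.

Lemma trmx_invmx_sym Q : Q^T = Q -> (invmx Q)^T = invmx Q.
Proof. by move=> sQ; rewrite trmx_inv sQ. Qed.

Lemma posdef_invmx Q : Q^T = Q -> posdef Q -> posdef (invmx Q).
Proof.
move=> sQ pQ x x0; have uQ := posdef_unitmx pQ.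
set y := invmx Q *m x.
have xE : x = Q *m y by rewrite mulKVmx.
have y0 : y != 0 by apply: contraNneq x0 => y0; rewrite xE y0 mulmx0.
clearbody y; rewrite xE trmx_mul sQ !mulmxA mulmxK //.
exact: pQ.
Qed.

Lemma psd_dual X Y B :
  X^T = X -> posdef X -> Y^T = Y -> posdef Y ->
  psd (Y - B^T *m X *m B) -> psd (invmx X - B *m invmx Y *m B^T).
Proof.
move=> sX pX sY pY h z.
have uX := posdef_unitmx pX; have uY := posdef_unitmx pY.
set Xi := invmx X; set Yi := invmx Y.
have sXi : Xi^T = Xi by apply: trmx_invmx_sym.
have sYi : Yi^T = Yi by apply: trmx_invmx_sym.
(* With [u := Y^-1 B^T z] the claimed quantity at [z] equals
   [qform X v + qform (Y - B^T X B) u]. *)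
set w := B^T *m z; set u := Yi *m w; set v := Xi *m z - B *m u.
have hu : 0 <= qform (Y - B^T *m X *m B) u := h u.
have hv : 0 <= qform X v := posdef_psd pX v.
suff : 0 <= qform (Xi - B *m Yi *m B^T) z by [].
rewrite qformB qform_conj -/w; rewrite qformB in hu.
have Yu : qform Y u = qform Yi w.
  by rewrite /qform /u trmx_mul sYi !mulmxA mulmxKV.
have BXBu : qform (B^T *m X *m B) u = qform X (B *m u).
  by have := qform_conj B^T X u; rewrite !trmxK.
have Xv : qform X v = qform Xi z - 2 * qform Yi w + qform X (B *m u).
  rewrite /qform /v linearB /= [(_ - _)^T]linearB /= !mulmxBl.
  have -> : (Xi *m z)^T *m X *m (Xi *m z) = z^T *m Xi *m z.
    by rewrite trmx_mul sXi !mulmxA mulmxKV.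
  have -> : (Xi *m z)^T *m X *m (B *m u) = w^T *m Yi *m w.
    by rewrite trmx_mul sXi !mulmxA mulmxKV // /u /w trmx_mul trmxK ?mulmxA.
  have -> : (B *m u)^T *m X *m (Xi *m z) = w^T *m Yi *m w.
    by rewrite trmx_mul !mulmxA mulmxK // /u trmx_mul sYi /w.
  rewrite !mxE; lra.
rewrite Yu BXBu in hu; rewrite Xv in hv; lra.
Qed.

Lemma qform1 x : qform 1%:M x = \sum_i x i 0 ^+ 2.
Proof. by rewrite /qform mulmx1 mxE; apply: eq_bigr => i _; rewrite mxE expr2. Qed.

Lemma sqr_le_qform1 x i : x i 0 ^+ 2 <= qform 1%:M x.
Proof.
by rewrite qform1 (bigD1 i) //= lerDl; apply: sumr_ge0 => j _; apply: sqr_ge0.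
Qed.

Lemma posdef1 : posdef (1%:M : 'M[R]_n).
Proof.
move=> x x0; rewrite -/(qform _ x) lt_def qform1.
rewrite sumr_ge0 ?andbT => [|i _]; last exact: sqr_ge0.
apply: contraNneq x0 => /psumr_eq0P x20; apply/eqP/matrixP => i j.
rewrite (ord1 j) !mxE; apply/eqP; rewrite -sqrf_eq0; apply/eqP.
by apply: x20 => // k _; apply: sqr_ge0.
Qed.

Lemma mul_le_abs_bound (a b c S : R) :
  a ^+ 2 <= S -> b ^+ 2 <= S -> a * c * b <= `|c| * S.
Proof.
move=> aS bS; have abS : `|a| * `|b| <= S.
  have : 0 <= (`|a| - `|b|) ^+ 2 by exact: sqr_ge0.
  rewrite -(real_normK (num_real a)) in aS.
  rewrite -(real_normK (num_real b)) in bS.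
  nra.
apply: le_trans (ler_norm _) _; rewrite !normrM (mulrC `|a|) -mulrA.
by rewrite ler_wpM2l // mulrC.
Qed.

Definition mx_abs_sum Q : R := \sum_i \sum_j `|Q i j|.

Lemma mx_abs_sum_ge0 Q : 0 <= mx_abs_sum Q.
Proof. by apply: sumr_ge0 => i _; apply: sumr_ge0. Qed.

Lemma qform_le_abs_sum Q x : qform Q x <= mx_abs_sum Q * qform 1%:M x.
Proof.
have -> : qform Q x = \sum_i \sum_j x i 0 * Q i j * x j 0.
  rewrite /qform mxE exchange_big /=; apply: eq_bigr => j _.
  by rewrite mxE mulr_suml; apply: eq_bigr => i _; rewrite mxE.
rewrite mulr_suml; apply: ler_sum => i _; rewrite mulr_suml.
by apply: ler_sum => j _; apply: mul_le_abs_bound; apply: sqr_le_qform1.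
Qed.

End QuadraticForm.

Section Feasibility.
Variables (R : realType) (n : nat) (N L : finType).
Variables (E : {set N * N * L}) (A : L -> 'M[R]_n).

Definition lyap_cert (g : R) (Q : N -> 'M[R]_n) : Prop :=
  (forall v, (Q v)^T = Q v /\ posdef (Q v)) /\
  (forall v w s, (v, w, s) \in E -> psd (g ^+ 2 *: Q v - (A s)^T *m Q w *m A s)).

Definition feasible (g : R) : Prop := 0 <= g /\ exists Q, lyap_cert g Q.

Lemma gamma_starE : gamma_star E A = inf feasible.
Proof. by []. Qed.

Lemma feasible_ge0 : lbound feasible 0.
Proof. by move=> g []. Qed.

Lemma feasible_exists : exists g, feasible g.
Proof.
pose C := \sum_l mx_abs_sum ((A l)^T *m A l).
have C0 : 0 <= C by apply: sumr_ge0 => l _; apply: mx_abs_sum_ge0.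
exists (C + 1); split; first lra.
exists (fun=> 1%:M); split => [v|v w s _ x].
  by rewrite trmx1; split => //; apply: posdef1.
rewrite -/(qform _ x) qformB qformZ mulmx1.
have CsC : mx_abs_sum ((A s)^T *m A s) <= C.
  by rewrite /C (bigD1 s) //= lerDl; apply: sumr_ge0 => l _; apply: mx_abs_sum_ge0.
have := qform_le_abs_sum ((A s)^T *m A s) x.
have := posdef_psd (@posdef1 R n) x; have := mx_abs_sum_ge0 ((A s)^T *m A s).
rewrite -/(qform _ x); nra.
Qed.

Lemma feasible_le g g' : feasible g -> g <= g' -> feasible g'.
Proof.
move=> [g0 [Q [hQ hE]]] gg'; split; first exact: le_trans gg'.
exists Q; split => // v w s vws.
rewrite -[g' ^+ 2](subrK (g ^+ 2)) scalerDl -addrA.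
apply: psdD; last exact: hE.
apply: psdZ; last by apply: posdef_psd; case: (hQ v).
by rewrite subr_ge0 lerXn2r // ?nnegrE // (le_trans g0).
Qed.

Lemma gamma_star_le g : feasible g -> gamma_star E A <= g.
Proof. by move=> hg; apply: ge_inf => //; exists 0; apply: feasible_ge0. Qed.

End Feasibility.

Section SuffixSum.
Variables (R : realType) (n : nat) (V L : finType) (A : L -> 'M[R]_n).
Notation edge := (V * V * L)%type.

Definition path_mx (d : seq edge) : 'M[R]_n :=
  foldl (fun M l => A l *m M) 1%:M (map (fun e => e.2) d).

(* [w0] and [e0] are the defaults returned on the empty path. *)
Definition path_start (w0 : V) (d : seq edge) : V :=
  if d is e :: _ then e.1.1 else w0.
Definition path_end (e0 : edge) (d : seq edge) : V := (last e0 d).1.2.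

Lemma path_mx_rcons d e : path_mx (rcons d e) = A e.2 *m path_mx d.
Proof. by rewrite /path_mx map_rcons foldl_rcons. Qed.

Lemma path_start_rcons w d e : path_start w (rcons d e) = path_start e.1.1 d.
Proof. by case: d. Qed.

Variables (P : V -> 'M[R]_n) (c : R).
Hypothesis c_gt0 : 0 < c.
Hypothesis P_sym : forall v, (P v)^T = P v.
Hypothesis P_posdef : forall v, posdef (P v).

Definition suffix_term (w0 : V) (d : seq edge) : 'M[R]_n :=
  c ^+ size d *: (path_mx d *m P (path_start w0 d) *m (path_mx d)^T).

(* Sum of [suffix_term] over the [K.+1] suffixes of a path [s] of length [K],
   the empty suffix being located at the end of [s]. *)
Definition suffix_sum (K : nat) (e0 : edge) (s : seq edge) : 'M[R]_n :=
  \sum_(j < K.+1) suffix_term (path_end e0 s) (drop (K - j) s).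

Lemma suffix_term_nil w : suffix_term w [::] = P w.
Proof. by rewrite /suffix_term /path_mx /= expr0 scale1r mul1mx trmx1 mulmx1. Qed.

Lemma suffix_term_rcons w d e :
  A e.2 *m suffix_term e.1.1 d *m (A e.2)^T = c^-1 *: suffix_term w (rcons d e).
Proof.
rewrite /suffix_term path_mx_rcons path_start_rcons size_rcons scalerA exprS.
rewrite mulrA mulVf ?gt_eqF // mul1r -scalemxAr -scalemxAl.
by rewrite trmx_mul !mulmxA.
Qed.

Lemma suffix_term_sym w d : (suffix_term w d)^T = suffix_term w d.
Proof. by rewrite /suffix_term linearZ /= !trmx_mul trmxK P_sym !mulmxA. Qed.

Lemma suffix_term_psd w d : psd (suffix_term w d).
Proof.
apply: psdZ; first exact/exprn_ge0/ltW.
exact/psd_conj/posdef_psd.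
Qed.

Lemma suffix_sum_sym K e0 s : (suffix_sum K e0 s)^T = suffix_sum K e0 s.
Proof.
by rewrite /suffix_sum linear_sum; apply: eq_bigr => j _; apply: suffix_term_sym.
Qed.

Lemma suffix_sum_posdef K e0 s : size s = K -> posdef (suffix_sum K e0 s).
Proof.
move=> sK; rewrite /suffix_sum big_ord_recl /= subn0 drop_oversize ?sK //.
rewrite suffix_term_nil; apply: posdefD => //.
by elim/big_ind: _ => [|? ? /psdD|j _]; [apply: psd0 | apply | apply: suffix_term_psd].
Qed.

(* Moving along an edge [e] shifts every suffix by one: the full path
   [rcons s e] enters, the empty suffix at the new end leaves. *)
Lemma suffix_sum_shift K e0 e0' s e :
  size s = K -> path_end e0 s = e.1.1 ->
  path_end e0' (behead (rcons s e)) = e.1.2 ->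
  c^-1 *: suffix_sum K e0' (behead (rcons s e)) -
    A e.2 *m suffix_sum K e0 s *m (A e.2)^T =
  c^-1 *: (P e.1.2 - c ^+ K.+1 *:
    (path_mx (rcons s e) *m P (path_start e.1.1 s) *m (path_mx (rcons s e))^T)).
Proof.
move=> sK s_end s'_end; have s'K : size (behead (rcons s e)) = K.
  by rewrite size_behead size_rcons.
set Y := suffix_sum K e0' _; set W := path_mx _ *m _ *m _.
have -> : A e.2 *m suffix_sum K e0 s *m (A e.2)^T = c^-1 *: (Y - P e.1.2) + c ^+ K *: W.
  rewrite /Y /suffix_sum big_ord_recr /= subnn drop0 big_ord_recl /= subn0.
  rewrite drop_oversize ?s'K // s_end s'_end suffix_term_nil [P e.1.2 + _]addrC addrK.
  rewrite mulmxDr mulmxDl; congr (_ + _); last first.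
    by rewrite /W /suffix_term sK path_mx_rcons -scalemxAr -scalemxAl trmx_mul !mulmxA.
  rewrite mulmx_sumr mulmx_suml scaler_sumr; apply: eq_bigr => j _.
  rewrite (suffix_term_rcons e.1.2); congr (_ *: suffix_term _ _).
  rewrite /bump leq0n add1n -drop1 drop_drop.
  have -> : (K - j.+1 + 1 = K - j)%N by have := ltn_ord j; lia.
  by rewrite drop_rcons // sK leq_subr.
rewrite !scalerBr scalerA exprS mulrA mulVf ?gt_eqF // mul1r.
by rewrite opprD opprB addrA addrCA subrr addr0.
Qed.

End SuffixSum.

Section ProductLiftToPathLift.
Variables (R : realType) (n : nat) (V L : finType).
Variables (E : {set V * V * L}) (A : L -> 'M[R]_n).

Lemma feasible_prodlift1 g :
  feasible (prodlift_edges E 1) (prodlift_mx A (T:=1)) g -> feasible E A g.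
Proof.
move=> [g0 [Q [hQ hE]]]; split => //; exists Q; split => // v w s vws.
have vws1 : (v, w, [tuple s]) \in prodlift_edges E 1.
  by rewrite inE; apply/existsP; exists [tuple (v, w, s)]; rewrite /is_path /= vws !eqxx.
by have := hE _ _ _ vws1; rewrite /prodlift_mx /= mulmx1.
Qed.

Section Certificate.
Variables (M : nat) (r : R) (Q : V -> 'M[R]_n).
Hypothesis r_gt0 : 0 < r.
Hypothesis Q_sym_posdef : forall v, (Q v)^T = Q v /\ posdef (Q v).
Hypothesis Q_edge : forall v w s, (v, w, s) \in prodlift_edges E M.+2 ->
  psd ((r ^+ M.+2) ^+ 2 *: Q v - (prodlift_mx A s)^T *m Q w *m prodlift_mx A s).

Let c := (r ^+ 2)^-1.
Let P v := invmx (Q v).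

Let c_gt0 : 0 < c. Proof. by rewrite invr_gt0 exprn_gt0. Qed.
Let cV_gt0 : 0 < c^-1. Proof. by rewrite invr_gt0. Qed.
Let P_sym v : (P v)^T = P v. Proof. by apply: trmx_invmx_sym; case: (Q_sym_posdef v). Qed.
Let P_posdef v : posdef (P v). Proof. by case: (Q_sym_posdef v); apply: posdef_invmx. Qed.

Lemma prodlift_dual s e : size s = M.+1 -> is_path E (rcons s e) ->
  psd (P e.1.2 - c ^+ M.+2 *:
    (path_mx A (rcons s e) *m P (path_start e.1.1 s) *m (path_mx A (rcons s e))^T)).
Proof.
case: s => [//|x s1] sK se_path.
have sizeT : size (rcons (x :: s1) e) == M.+2 by rewrite size_rcons sK.
pose t := Tuple sizeT.
have t_edge : (x.1.1, e.1.2, map_tuple (fun e => e.2) t) \in prodlift_edges E M.+2.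
  by rewrite inE; apply/existsP; exists t; rewrite /= se_path /= last_rcons !eqxx.
have [[sQw pQw] [sQv pQv]] := (Q_sym_posdef e.1.2, Q_sym_posdef x.1.1).
have rho_gt0 : 0 < (r ^+ M.+2) ^+ 2 by rewrite !exprn_gt0.
have := psd_dual sQw pQw _ (posdefZ rho_gt0 pQv) (Q_edge t_edge).
rewrite linearZ /= sQv => /(_ erefl).
rewrite invmxZ ?unitmxZ ?unitfE ?gt_eqF ?posdef_unitmx // -scalemxAr -scalemxAl.
by rewrite /c -exprM mulnC exprM exprVn.
Qed.

(* A node is a path of length [M.+1]; its first edge only serves as the
   default of [path_end]. *)
Definition pathlift_cert (p : pnode E M.+1) : 'M[R]_n :=
  invmx (suffix_sum A P c M.+1 (thead (val p)) (val (val p))).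

Lemma pathlift_cert_sym_posdef p :
  (pathlift_cert p)^T = pathlift_cert p /\ posdef (pathlift_cert p).
Proof.
have sym := suffix_sum_sym A c P_sym M.+1 (thead (val p)) (val (val p)).
split; first exact: trmx_invmx_sym.
by apply: posdef_invmx => //; apply: suffix_sum_posdef; rewrite ?size_tuple.
Qed.

Lemma pathlift_cert_edge (p p' : pnode E M.+1) e :
  is_path E (rcons (val (val p)) e) -> val (val p') = behead (rcons (val (val p)) e) ->
  psd (r ^+ 2 *: pathlift_cert p - (A e.2)^T *m pathlift_cert p' *m A e.2).
Proof.
rewrite /pathlift_cert; have sK : size (val (val p)) = M.+1 := size_tuple _.
move: (thead (val p)) (thead (val p')) (val (val p)) (val (val p')) sK.
move=> e0 e0' [//|x s] s' sK se_path ->.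
have s_end : path_end e0 (x :: s) = e.1.1.
  by case/andP: se_path => _ /=; rewrite rcons_path => /andP[_ /eqP].
have s'_end : path_end e0' (behead (rcons (x :: s) e)) = e.1.2.
  by rewrite /path_end /= last_rcons.
set X := suffix_sum A P c M.+1 e0 (x :: s).
set Y := suffix_sum A P c M.+1 e0' _.
have sX : X^T = X by apply: suffix_sum_sym.
have pX : posdef X by apply: suffix_sum_posdef.
have sY : (c^-1 *: Y)^T = c^-1 *: Y by rewrite linearZ /= suffix_sum_sym.
have pY : posdef (c^-1 *: Y).
  apply: posdefZ => //.
  by apply: suffix_sum_posdef => //; rewrite size_behead size_rcons.
have := psd_dual (B := (A e.2)^T) sX pX sY pY.
rewrite trmxK suffix_sum_shift // => /(_ (psdZ (ltW cV_gt0) (prodlift_dual sK se_path))).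
rewrite invmxZ; last by have := posdef_unitmx pY.
have -> : r ^+ 2 *: invmx X - (A e.2)^T *m invmx Y *m A e.2 =
    c^-1 *: (invmx X - (A e.2)^T *m (c^-1^-1 *: invmx Y) *m A e.2).
  rewrite scalerBr -scalemxAr -scalemxAl scalerA divff ?scale1r ?invrK //.
  by rewrite gt_eqF ?exprn_gt0.
exact: psdZ (ltW cV_gt0).
Qed.

End Certificate.

Lemma feasible_pathlift M r : 0 < r ->
  feasible (prodlift_edges E M.+2) (prodlift_mx A (T:=M.+2)) (r ^+ M.+2) ->
  feasible (pathlift_edges E M.+1) A r.
Proof.
move=> r_gt0 [_ [Q [hQ hE]]]; split; first exact: ltW.
exists (pathlift_cert r Q); split; first exact: pathlift_cert_sym_posdef.
move=> p p' s; rewrite inE => /existsP[e /and3P[se_path /eqP s'E /eqP /= <-]].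
exact: pathlift_cert_edge.
Qed.

End ProductLiftToPathLift.

Lemma le_powR_inf (R : realType) (F : set R) (T : nat) (x : R) :
  (0 < T)%N -> (exists g, F g) -> lbound F 0 ->
  (forall g g', F g -> g <= g' -> F g') ->
  (forall r, 0 < r -> F (r ^+ T) -> x <= r) ->
  x <= powR (inf F) T%:R^-1.
Proof.
move=> T_gt0 [g Fg] F_ge0 F_up Fx.
have inf_ge0 : 0 <= inf F by apply: lb_le_inf => //; exists g.
have T_neq0 : T%:R != 0 :> R by rewrite pnatr_eq0 -lt0n.
set k := powR (inf F) T%:R^-1.
have k_ge0 : 0 <= k := powR_ge0 _ _.
apply/ler_addgt0Pr => eps eps_gt0; apply: Fx; first by rewrite ltr_wpDl.
have infE : inf F = powR k T%:R by rewrite -powRrM mulVf // powRr1.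
have : inf F < (k + eps) ^+ T.
  rewrite infE -powR_mulrn; last lra.
  by rewrite gt0_ltr_powR ?ltr0n // ?nnegrE; lra.
by case/(inf_lt (ex_intro _ g Fg)) => y Fy /ltW; apply: F_up.
Qed.

Theorem theorem3p9 (R : realType) (n : nat) (V L : finType)
  (E : {set V * V * L}) (A : L -> 'M[R]_n) (T : nat) :
  strongly_connected E -> (1 <= T)%N ->
  gamma_pathdep E A T.-1 <=
    powR (gamma_star (prodlift_edges E T) (prodlift_mx A (T:=T))) (T%:R^-1).
Proof.
move=> _ T_gt0; rewrite gamma_starE.
apply: le_powR_inf => //; [exact: feasible_exists | exact: feasible_ge0 |
  exact: feasible_le | move=> r r_gt0].
case: T T_gt0 => [//|[|M]] _ Fr /=.
  exact/gamma_star_le/feasible_prodlift1.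
exact/gamma_star_le/feasible_pathlift.
Qed.
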